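(* Let $H$ be a finite group and $K\unlhd H$ with $H/K\cong S_3$. If $\chi\in\mathrm{Irr}(K)$ is $H$-invariant, then $\chi$ extends to $H$ and $|\mathrm{Irr}(H\mid\chi)|=3$.
   Context: $\mathrm{Irr}(H\mid\chi)$ denotes the set of irreducible constituents of the induced character $\chi^H$. *)

From mathcomp Require Import all_boot all_order all_algebra all_fingroup all_solvable all_field all_character.
Set Implicit Arguments. Unset Strict Implicit. Unset Printing Implicit Defensive.

From mathcomp Require Import all_boot all_order all_algebra all_fingroup all_solvable all_field all_character.
From mathcomp Require Import zify.
Import GRing.Theory Num.Theory.
Local Open Scope ring_scope.

(* Let A/K be
   the Sylow 3-subgroup of H/K, so K <| A <| H with |A:K| = 3, |H:A| = 2.
   1. chi extends to A, since |A:K| is prime (library, Isaacs 6.20).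
   2. As A/K is abelian, Gallagher's theorem shows that the extensions of
      chi to A are exactly the 3 = |A/K| constituents of chi^A.
   3. H acts on these extensions by conjugation; a Sylow 2-subgroup P of H
      fixes one of them, e, since 2 does not divide 3.  The inertia group of
      e then contains both A and P, hence is all of H, so e (and with it chi)
      extends to H across the prime index |H:A| = 2.
   4. By Gallagher again, Irr(H | chi) is in bijection with Irr(H/K), and a
      nonabelian group of order 6 has exactly 3 irreducible characters. *)

Section GroupFacts.

Set Implicit Arguments.
Unset Strict Implicit.
Local Open Scope group_scope.
Local Open Scope ring_scope.

Lemma card_sum_squares_six (I : finType) (d : I -> nat) (i0 i1 : I) :
    (forall j, 0 < d j)%N -> d i0 = 1%N -> d i1 != 1%N ->
    (\sum_j d j ^ 2 = 6)%N -> #|I| = 3%N.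
Proof.
move=> d_gt0 d_i0 d_i1 sum_d.
have i10 : i1 != i0 by apply: contra d_i1 => /eqP->; rewrite d_i0.
pose R := [pred j | (j != i0) && (j != i1)].
have {}sum_d : (1 + d i1 ^ 2 + \sum_(j in R) d j ^ 2 = 6)%N.
  by rewrite -sum_d [RHS](bigD1 i0) //= [in RHS](bigD1 i1) //= d_i0 addnA.
have d_i1_2 : d i1 = 2%N.
  by move: (d_gt0 i1) d_i1 sum_d; rewrite expnS expn1 => + /eqP; nia.
have sumR : (\sum_(j in R) d j ^ 2 = 1)%N by move: sum_d; rewrite d_i1_2; lia.
have cardR_le1 : (#|R| <= 1)%N.
  by rewrite -sumR -sum1_card leq_sum // => j _; rewrite expn_gt0 d_gt0.
have cardR_gt0 : (0 < #|R|)%N.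
  apply/card_gt0P; apply/existsP; apply: contraT; rewrite negb_exists.
  by move=> /forallP R0; move: sumR; rewrite big_pred0 // => j; exact/negbTE/R0.
rewrite (cardD1 i0) (cardD1 i1) !inE i10 /=.
have -> : #|[predD1 [predD1 I & i0] & i1]| = #|R|.
  by apply: eq_card => j; rewrite !inE andbT andbC.
lia.
Qed.

(* A nonabelian group of order 6 has three irreducible characters: the sum
   of the squared degrees is 6, the trivial character is linear, and some
   irreducible character is not. *)
Lemma Nirr_nonabelian_order6 (gT : finGroupType) (G : {group gT}) :
  #|G| = 6%N -> ~~ abelian G -> Nirr G = 3%N.
Proof.
move=> oG nabG.
pose d (j : Iirr G) := Num.truncn ('chi_j 1%g).
have dE j : 'chi_j 1%g = (d j)%:R by rewrite truncnK ?Cnat_irr1.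
have [i1 nlin_i1] : exists i1 : Iirr G, d i1 != 1%N.
  apply/existsP; apply: contraR nabG; rewrite negb_exists => /forallP lin.
  apply/char_abelianP => j; rewrite qualifE /= irr_char /= dE.
  by move/negPn/eqP: (lin j) ->.
rewrite -[Nirr G]card_ord; apply: (@card_sum_squares_six _ d 0 i1 _ _ nlin_i1).
- by move=> j; rewrite -(@ltr_nat algC) -dE irr1_gt0.
- by apply/eqP; rewrite -(@eqr_nat algC) -dE irr0 cfun11.
- apply/eqP; rewrite -(@eqr_nat algC) natr_sum -oG -irr_sum_square.
  by apply/eqP/eq_bigr => j _; rewrite dE natrX.
Qed.

Lemma card_S3 : #|[set: 'S_3]| = 6%N.
Proof. by rewrite cardsT card_Sn. Qed.

Lemma nonabelian_S3 : ~~ abelian [set: 'S_3].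
Proof.
apply/negP => /centsP comm.
have := comm (tperm (0 : 'I_3) 1) (in_setT _) (tperm (1 : 'I_3) 2) (in_setT _).
move/(congr1 (fun s : 'S_3 => s (0 : 'I_3))).
have t01_0 : tperm (0 : 'I_3) 1 0 = 1 := tpermL _ _.
have t12_1 : tperm (1 : 'I_3) 2 1 = 2 := tpermL _ _.
have t12_0 : tperm (1 : 'I_3) 2 0 = 0 by apply: tpermD.
by rewrite !permM t01_0 t12_1 t12_0 t01_0.
Qed.

(* A p-group acting on a set whose size is prime to p has a fixed point:
   the non-fixed points fall into orbits of size divisible by p. *)
Lemma pgroup_action_fixed_point (aT : finGroupType) (sT : finType)
    (D : {group aT}) (to : action D sT) (p : nat) (P : {group aT})
    (S : {set sT}) :
  p.-group P -> [acts P, on S | to] -> ~~ (p %| #|S|)%N ->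
  exists2 x, x \in S & forall g, g \in P -> to x g = x.
Proof.
move=> pP actsS p'S; have := pgroup_fix_mod pP actsS.
have [-> | [x /setIP[Sx /afixP fix_x]] _] := set_0Vmem 'Fix_(S | to)(P).
  by rewrite cards0 mod0n => /eqP; rewrite -/(dvdn p _) (negbTE p'S).
by exists x.
Qed.

(* A subgroup I lying between a subgroup A of prime index p in H and H
   itself, and containing a Sylow p-subgroup of H, is all of H: otherwise
   I = A, whose index p could not divide the p'-index of the Sylow. *)
Lemma Sylow_prime_index_overgroup (gT : finGroupType) (H A I P : {group gT})
    (p : nat) :
  prime p -> #|H : A| = p -> p.-Sylow(H) P ->
  A \subset I -> I \subset H -> P \subset I -> H \subset I.
Proof.
move=> pr_p iHA sylP sAI sIH sPI.
have iHA_split := Lagrange_index sIH sAI; rewrite iHA in iHA_split.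
have [/eqP | nIA] := eqVneq #|I : A| 1%N.
  rewrite indexg_eq1 => sIA; have sPA := subset_trans sPI sIA.
  have /and3P[_ _ p'HP] := sylP.
  have iHA_dvd : (#|H : A| %| #|H : P|)%N.
    by rewrite -(Lagrange_index (subset_trans sAI sIH) sPA) dvdn_mulr.
  by have := pnat_dvd iHA_dvd p'HP; rewrite iHA p'natE // dvdnn.
have iHI_dvd : (#|H : I| %| p)%N by rewrite -iHA_split dvdn_mulr.
case/primeP: (pr_p) => _ /(_ _ iHI_dvd) /orP[iHI1 | /eqP iHI].
  by rewrite -indexg_eq1.
by move: iHA_split (prime_gt0 pr_p) nIA; rewrite iHI => + + /eqP; nia.
Qed.

(* A normal subgroup K of index 6 in H lies below a normal subgroup A of H
   with |A : K| = 3 and |H : A| = 2: the preimage of a Sylow 3-subgroup of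
   H / K, normal since its index is 2. *)
Lemma index6_normal_chain (gT : finGroupType) (K H : {group gT}) :
    K <| H -> #|H : K| = 6%N ->
  exists A : {group gT}, [/\ K \subset A, A <| H, #|A : K| = 3%N
                             & #|H : A| = 2%N].
Proof.
move=> nsKH iHK; have [sKH nKH] := andP nsKH.
have [Q sylQ] := Sylow_exists 3 (H / K).
have oQ : #|Q| = 3%N.
  by rewrite (card_Hall sylQ) card_quotient // iHK p_part.
exists (coset K @*^-1 Q)%G; set A := (coset K @*^-1 Q)%G.
have sKA : K \subset A := sub_cosetpre Q.
have sAH : A \subset H by rewrite -(quotientGK nsKH) morphpreS ?(pHall_sub sylQ).
have iAK : #|A : K| = 3%N.
  by rewrite -card_quotient ?(subset_trans sAH nKH) // cosetpreK.
have iHA : #|H : A| = 2%N.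
  by have := Lagrange_index sAH sKA; rewrite iAK iHK; lia.
by split=> //; apply: index2_normal.
Qed.

End GroupFacts.

Section Extensions.

Set Implicit Arguments.
Unset Strict Implicit.

Variable gT : finGroupType.
Local Open Scope group_scope.
Local Open Scope ring_scope.

Definition extensions (K A : {group gT}) (i : Iirr K) : {set Iirr A} :=
  [set j : Iirr A | 'Res[K] 'chi_j == 'chi_i].
Arguments extensions {K} A i.

Lemma card_Ind_constituents (K H : {group gT}) (i : Iirr K) (t : Iirr H) :
  K <| H -> 'Res[K] 'chi_t = 'chi_i ->
  #|[set j : Iirr H | j \in irr_constt ('Ind[H] 'chi_i)]| = Nirr (H / K).
Proof.
move=> nsKH ext_t; have [_ injM imM _] := constt_Ind_ext nsKH ext_t.
rewrite -[RHS]card_ord -(card_codom injM).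
by apply: eq_card => j; rewrite inE imM.
Qed.

(* When A / K is abelian, every constituent of 'Ind[A] 'chi_i is of the form
   'chi_e * beta with beta a linear character of A / K, hence an extension of
   'chi_i; so there are exactly |A / K| extensions. *)
Lemma card_extensions_abelian (K A : {group gT}) (i : Iirr K) (e : Iirr A) :
  K <| A -> abelian (A / K) -> 'Res[K] 'chi_e = 'chi_i ->
  #|extensions A i| = #|(A / K)%g|.
Proof.
move=> nsKA abAK ext_e.
have [irrM _ imM _] := constt_Ind_ext nsKA ext_e.
have -> : extensions A i = [set j : Iirr A | j \in irr_constt ('Ind[A] 'chi_i)].
  apply/setP => j; rewrite !in_set; apply/eqP/idP => [ext_j | ].
    by rewrite constt_Ind_Res ext_j constt_irr inE.
  rewrite imM => /codomP[b ->].
  rewrite cfIirrE ?irrM // rmorphM /= ext_e cfRes_sub_ker; last first.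
    by rewrite mod_IirrE // cfker_mod.
  rewrite mod_IirrE // cfMod1 lin_char1 ?scale1r ?mul1r //.
  exact/char_abelianP.
by rewrite (card_Ind_constituents nsKA ext_e) -card_Iirr_abelian ?card_ord.
Qed.

Lemma conjg_Iirr_is_action (A H : {group gT}) :
  A <| H -> is_action H (@conjg_Iirr gT A).
Proof.
move=> nsAH; split=> [y j k eq_jk | j y z Hy Hz].
  by apply/irr_inj/(can_inj (cfConjgK y)); rewrite -!conjg_IirrE eq_jk.
by apply: irr_inj; rewrite !conjg_IirrE (cfConjgM _ nsAH).
Qed.

Lemma conjg_extension (K A H : {group gT}) (i : Iirr K) (j : Iirr A) y :
  K <| H -> A <| H -> y \in H -> y \in 'I['chi_i] ->
  j \in extensions A i -> conjg_Iirr j y \in extensions A i.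
Proof.
move=> nsKH nsAH Hy Iy; rewrite !inE conjg_IirrE => /eqP ext_j.
by rewrite -(cfConjgRes _ nsAH nsKH Hy) ext_j inertiaJ.
Qed.

(* Extension across a normal subgroup A of prime index p: if 'chi_i is
   H-invariant and the number of its extensions to A is prime to p, then a
   Sylow p-subgroup of H fixes one of them, which is then H-invariant and
   extends to H. *)
Lemma extend_across_prime_index (K A H : {group gT}) (i : Iirr K) (p : nat) :
    K <| H -> A <| H -> K \subset A -> prime p -> #|H : A| = p ->
    H \subset 'I['chi_i] -> ~~ (p %| #|extensions A i|)%N ->
  exists t : Iirr H, 'Res[K] 'chi_t = 'chi_i.
Proof.
move=> nsKH nsAH sKA pr_p iHA IHchi p'ext.
have [sAH nAH] := andP nsAH.
pose to := Action (conjg_Iirr_is_action nsAH).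
have [P sylP] := Sylow_exists p H; have sPH := pHall_sub sylP.
have actsP : [acts P, on extensions A i | to].
  apply/subsetP => y Py; have Hy := subsetP sPH y Py.
  rewrite !inE Hy; apply/subsetP => j ext_j; rewrite inE.
  exact: (conjg_extension nsKH nsAH Hy (subsetP IHchi y Hy) ext_j).
have [e ext_e fix_e] :=
  pgroup_action_fixed_point (pHall_pgroup sylP) actsP p'ext.
have PIe : P \subset 'I['chi_e].
  apply/subsetP => y Py; rewrite inE (subsetP nAH) ?(subsetP sPH) //=.
  by rewrite -conjg_IirrE; have /= -> := fix_e y Py.
have HIe : H \subset 'I['chi_e].
  have sAI : A \subset 'I_H['chi_e] by rewrite subsetI sAH sub_inertia.
  have sPI : P \subset 'I_H['chi_e] by rewrite subsetI sPH PIe.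
  have := Sylow_prime_index_overgroup pr_p iHA sylP sAI (subsetIl _ _) sPI.
  by move/subset_trans; apply; apply: subsetIr.
have [t ext_t] := prime_invariant_irr_extendible nsAH iHA pr_p HIe.
exists t; move: ext_e; rewrite inE => /eqP <-.
by rewrite -ext_t cfResRes.
Qed.

End Extensions.

Theorem lemma3p7 (gT : finGroupType) (H K : {group gT}) (i : Iirr K) :
  (K <| H)%g ->
  ((H / K)%g \isog [set: 'S_3])%g ->
  (H \subset 'I['chi[K]_i])%g ->
  (exists j : Iirr H, 'Res[K] 'chi[H]_j = 'chi[K]_i) /\
  #|[set j : Iirr H | j \in irr_constt ('Ind[H] 'chi[K]_i)]| = 3%N.
Proof.
move=> nsKH isoQ IHchi; have [sKH nKH] := andP nsKH.
have oQ : #|(H / K)%g| = 6%N by rewrite (card_isog isoQ) card_S3.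
have nabQ : ~~ abelian (H / K)%g by rewrite (isog_abelian isoQ) nonabelian_S3.
have [A [sKA nsAH iAK iHA]] :=
  index6_normal_chain nsKH (etrans (esym (card_quotient nKH)) oQ).
have nsKA : (K <| A)%g := normalS sKA (normal_sub nsAH) nsKH.
have [e ext_e] := prime_invariant_irr_extendible nsKA iAK (isT : prime 3)
  (subset_trans (normal_sub nsAH) IHchi).
have oAK : #|(A / K)%g| = 3%N by rewrite card_quotient ?normal_norm ?iAK.
have abAK : abelian (A / K)%g by rewrite cyclic_abelian ?prime_cyclic ?oAK.
have card_ext := card_extensions_abelian nsKA abAK ext_e.
(* 2 does not divide 3, so chi extends across the index 2 of A in H. *)
have [t ext_t] : exists t : Iirr H, 'Res[K] 'chi_t = 'chi_i.
  apply: extend_across_prime_index nsKH nsAH sKA (isT : prime 2) iHA IHchi _.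
  by rewrite card_ext oAK.
split; first by exists t.
by rewrite (card_Ind_constituents nsKH ext_t) Nirr_nonabelian_order6.
Qed.
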